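(* Let $K$ be a nonempty finite set, $X=\Delta(K)$, and let $u,v\in\Delta(X)$ have finite supports $U$ and $V$. Then $d_3(u,v)\ge d_5(u,v)$.
   Context: $X=\Delta(K)\subset\mathbb R^K$ with $\|p\|_1=\sum_k|p^k|$. $\mathcal M_3(u,v)$ is the set of finite positive Borel measures $\gamma$ on $X^2\times[0,1]^2$ such that for all continuous $f:X\to\mathbb R$: - $\int\lambda f(x)\,d\gamma(x,y,\lambda,\mu)=u(f)$, and - $\int\mu f(y)\,d\gamma=v(f)$. Then $d_3(u,v)=\inf_{\gamma\in\mathcal M_3(u,v)}\int\|\lambda x-\mu y\|_1\,d\gamma$. $\mathcal M_5(u,v)$ is the set of $(\alpha,\beta)\in(\mathbb R_+^{U\times V})^2$ with: - $\sum_{y'\in V}\alpha(x,y')\le u(x)$ for all $x\in U$, and - $\sum_{x'\in U}\beta(x',y)\le v(y)$ for all $y\in V$. Then $$d_5(u,v)=\inf_{(\alpha,\beta)\in\mathcal M_5(u,v)}\Big(2+\sum_{(x,y)\in U\times V}\big(\|\alpha(x,y)x-\beta(x,y)y\|_1-\alpha(x,y)-\beta(x,y)\big)\Big).$$ *)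

From HB Require Import structures.
From mathcomp Require Import all_boot all_order all_algebra.
From mathcomp Require Import all_classical all_reals all_analysis.
Set Implicit Arguments. Unset Strict Implicit. Unset Printing Implicit Defensive.
Import Order.TTheory GRing.Theory Num.Theory.
Import numFieldNormedType.Exports.
Local Open Scope classical_set_scope.
Local Open Scope ring_scope.

(* K = {0,...,n-1} (n > 0); points of R^K are row vectors 'rV[R]_n. *)

Definition l1norm (R : realType) (n : nat) (p : 'rV[R]_n) : R :=
  \sum_(k < n) `|p ord0 k|.

Definition simplex (R : realType) (n : nat) : set 'rV[R]_n :=
  [set p | (forall k, 0 <= p ord0 k) /\ \sum_(k < n) p ord0 k = 1].

(* the ambient space (R^K x R^K) x (R x R), a point is ((x, y), (lambda, mu)) *)
Definition Amb (R : realType) (n : nat) : Type :=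
  (('rV[R]_n * 'rV[R]_n) * (R * R))%type.

Definition BAmb (R : realType) (n : nat) :=
  g_sigma_algebraType (@open (('rV[R]_n * 'rV[R]_n) * (R * R))%type).

Definition S3 (R : realType) (n : nat) : set (BAmb R n) :=
  [set z | @simplex R n z.1.1 /\ @simplex R n z.1.2 /\
           (0 <= z.2.1 <= 1) /\ (0 <= z.2.2 <= 1)].

(* a probability measure on X with finite support U : it is given by the
   (duplicate-free) list U of support points and the weight function w,
   with w x > 0 on U and sum_{x in U} w x = 1.  u(f) = sum_{x in U} w x f x. *)
Definition fin_prob (R : realType) (n : nat) (U : seq 'rV[R]_n) (w : 'rV[R]_n -> R) :=
  [/\ uniq U, (forall x, x \in U -> @simplex R n x),
      (forall x, x \in U -> 0 < w x) & \sum_(x <- U) w x = 1].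

Definition integ (R : realType) (n : nat) (U : seq 'rV[R]_n) (w : 'rV[R]_n -> R)
  (f : 'rV[R]_n -> R) : R := \sum_(x <- U) w x * f x.

(* M_3(u,v): finite positive Borel measures on X^2 x [0,1]^2
   (= Borel measures on the ambient space, of finite mass, carried by S3) *)
Definition M3 (R : realType) (n : nat) (U V : seq 'rV[R]_n) (wu wv : 'rV[R]_n -> R) :
  set {measure set (BAmb R n) -> \bar R} :=
  [set g | (g setT < +oo)%E /\ g (~` @S3 R n) = 0%E /\
     (forall f : 'rV[R]_n -> R, {within @simplex R n, continuous f} ->
        (\int[g]_(z in @S3 R n) (z.2.1 * f z.1.1)%:E)%E = (integ U wu f)%:E /\
        (\int[g]_(z in @S3 R n) (z.2.2 * f z.1.2)%:E)%E = (integ V wv f)%:E)].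

Definition d3 (R : realType) (n : nat) (U V : seq 'rV[R]_n) (wu wv : 'rV[R]_n -> R)
  : \bar R :=
  ereal_inf [set (\int[g]_(z in @S3 R n) (l1norm (z.2.1 *: z.1.1 - z.2.2 *: z.1.2))%:E)%E
            | g in M3 U V wu wv].

Definition M5 (R : realType) (n : nat) (U V : seq 'rV[R]_n) (wu wv : 'rV[R]_n -> R) :
  set (('rV[R]_n -> 'rV[R]_n -> R) * ('rV[R]_n -> 'rV[R]_n -> R)) :=
  [set ab | (forall x y, x \in U -> y \in V -> 0 <= ab.1 x y /\ 0 <= ab.2 x y) /\
     (forall x, x \in U -> \sum_(y' <- V) ab.1 x y' <= wu x) /\
     (forall y, y \in V -> \sum_(x' <- U) ab.2 x' y <= wv y)].

Definition d5 (R : realType) (n : nat) (U V : seq 'rV[R]_n) (wu wv : 'rV[R]_n -> R)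
  : \bar R :=
  ereal_inf [set (2 + \sum_(x <- U) \sum_(y <- V)
       (l1norm (ab.1 x y *: x - ab.2 x y *: y) - ab.1 x y - ab.2 x y))%:E
     | ab in M5 U V wu wv].

From HB Require Import structures.
From mathcomp Require Import all_boot all_order all_algebra.
From mathcomp Require Import all_classical all_reals all_analysis.
From mathcomp Require Import measurable_realfun lra.
Import Order.TTheory GRing.Theory Num.Theory.
Import numFieldNormedType.Exports.
Local Open Scope classical_set_scope.
Local Open Scope ring_scope.

(* Let gamma be in M_3(u, v).  Testing the marginal conditions against
   continuous functions that separate the points of U (resp. V) shows that
   gamma-almost everywhere lambda vanishes unless x lies in U, mu vanishes
   unless y lies in V, and that the lambda- and mu-masses alpha(x, y),
   beta(x, y) of the cells {(x, y)} x [0,1]^2 form an element of M_5(u, v).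
   On X^2 one has |lambda x - mu y|_1 = lambda + mu - 2 sum_k min(lambda x_k,
   mu y_k), so the cost of gamma is 2 - 2 times the integral of this overlap.
   Splitting that integral over the cells and using that the integral of a
   minimum is at most the minimum of the integrals bounds it by
   sum_(x, y) sum_k min(alpha x_k, beta y_k), which is exactly what makes
   the d_5-cost of (alpha, beta) at most the cost of gamma. *)

Lemma normrB_add_min2 (R : realDomainType) (u v : R) :
  `|u - v| + 2 * Num.min u v = u + v.
Proof.
have [uv|vu] := leP u v; first by rewrite ler0_norm ?subr_le0 //; lra.
by rewrite ger0_norm ?subr_ge0 ?(ltW vu) //; lra.
Qed.

Lemma sum_eq_mem {R : pzSemiRingType} {T : eqType} {s : seq T} (x : T) :
  uniq s -> \sum_(a <- s) (x == a)%:R = (x \in s)%:R :> R.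
Proof.
move=> us; rewrite -natr_sum -count_uniq_mem // -sum1_count.
by congr _%:R; rewrite [RHS]big_mkcond; apply: eq_bigr => a _; rewrite eq_sym.
Qed.

Section overlap.
Context {R : realType} {n : nat}.
Implicit Types (x y : 'rV[R]_n) (a b : R).

Definition overlap a x b y : R :=
  \sum_(k < n) Num.min (a * x ord0 k) (b * y ord0 k).

Lemma l1normB_add_overlap a x b y :
  \sum_(k < n) x ord0 k = 1 -> \sum_(k < n) y ord0 k = 1 ->
  l1norm (a *: x - b *: y) + 2 * overlap a x b y = a + b.
Proof.
move=> x1 y1; rewrite /l1norm /overlap mulr_sumr -big_split /=.
have -> : a + b = \sum_(k < n) (a * x ord0 k + b * y ord0 k).
  by rewrite big_split /= -!mulr_sumr x1 y1 !mulr1.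
by apply: eq_bigr => k _; rewrite !mxE normrB_add_min2.
Qed.

Lemma overlap_ge0 a x b y : 0 <= a -> 0 <= b ->
  (forall k, 0 <= x ord0 k) -> (forall k, 0 <= y ord0 k) -> 0 <= overlap a x b y.
Proof.
by move=> a0 b0 x0 y0; apply: sumr_ge0 => k _; rewrite le_min !mulr_ge0.
Qed.

Lemma overlap_le_l a x b y : \sum_(k < n) x ord0 k = 1 -> overlap a x b y <= a.
Proof.
move=> x1; rewrite -[leRHS]mulr1 -x1 mulr_sumr.
by apply: ler_sum => k _; rewrite ge_min lexx.
Qed.

Lemma overlap_le_r a x b y : \sum_(k < n) y ord0 k = 1 -> overlap a x b y <= b.
Proof.
move=> y1; rewrite -[leRHS]mulr1 -y1 mulr_sumr.
by apply: ler_sum => k _; rewrite ge_min lexx orbT.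
Qed.

End overlap.

Lemma closed_mem_seq (Y : topologicalType) (s : seq Y) :
  hausdorff_space Y -> closed [set y | y \in s].
Proof.
move=> hY; elim: s => [|a s IHs].
  by rewrite (_ : [set y | _] = set0); [exact: closed0|apply/seteqP; split].
have -> : [set y | y \in a :: s] = [set a] `|` [set y | y \in s].
  by apply/seteqP; split=> y /=; rewrite in_cons;
    [case/orP=> [/eqP|]; [left|right]|case=> [->|->]; rewrite ?eqxx ?orbT].
exact/closedU/IHs/accessible_closed_set1/hausdorff_accessible.
Qed.

Lemma continuous_fst (A B : topologicalType) : continuous (@fst A B).
Proof. by move=> [x y]; exact: cvg_fst. Qed.

Lemma continuous_snd (A B : topologicalType) : continuous (@snd A B).
Proof. by move=> [x y]; exact: cvg_snd. Qed.

Lemma closed_preimage {A B : topologicalType} {f : A -> B} {C : set B} :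
  continuous f -> closed C -> closed (f @^-1` C).
Proof. by move=> cf; apply: preimage_closed => z _; exact: cf. Qed.

Section ambient_space.
Context {R : realType} {n : nat}.
Local Notation Omega := (('rV[R]_n * 'rV[R]_n) * (R * R))%type.
Local Notation B := (BAmb R n).

Lemma continuous_x : continuous (fun z : Omega => z.1.1).
Proof. by move=> z; apply: continuous_comp; apply: continuous_fst. Qed.

Lemma continuous_y : continuous (fun z : Omega => z.1.2).
Proof.
by move=> z; apply: continuous_comp; [apply: continuous_fst|apply: continuous_snd].
Qed.

Lemma continuous_lambda : continuous (fun z : Omega => z.2.1).
Proof.
by move=> z; apply: continuous_comp; [apply: continuous_snd|apply: continuous_fst].
Qed.

Lemma continuous_mu : continuous (fun z : Omega => z.2.2).
Proof. by move=> z; apply: continuous_comp; apply: continuous_snd. Qed.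

Lemma continuous_coord {T : topologicalType} {f : T -> 'rV[R]_n} (k : 'I_n) :
  continuous f -> continuous (fun z => f z ord0 k).
Proof.
by move=> cf z; exact: (continuous_comp (cf z) (@coord_continuous R 1 n ord0 k (f z))).
Qed.

Lemma hausdorff_rV : hausdorff_space 'rV[R]_n.
Proof. exact: norm_hausdorff. Qed.

Lemma closed_measurable_open (A : set Omega) : closed A -> measurable (A : set B).
Proof.
move=> cA; rewrite -[A]setCK; apply: measurableC.
by apply: sub_sigma_algebra; exact: closed_openC.
Qed.

Lemma continuous_measurable_open (D : set B) (f : Omega -> R) :
  measurable D -> continuous f -> measurable_fun D (f : B -> R).
Proof.
move=> mD /continuousP cf.
apply: (measurable_funS measurableT (@subsetT _ D)).
apply: (measurability _ (measurable_realfun.RGenOpens.measurableE R)).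
move=> _ [_ [a [b ->] <-]]; rewrite setTI.
by apply: sub_sigma_algebra; apply: cf; exact: interval_open.
Qed.

Lemma measurable_fun_mem_seq (D : set B) (P : Omega -> 'rV[R]_n)
    (s : seq 'rV[R]_n) : continuous P ->
  measurable_fun D (fun z : B => (P z \in s)%:R : R).
Proof.
move=> cP.
have -> : (fun z : B => (P z \in s)%:R : R) = \1_(P @^-1` [set y | y \in s]).
  apply/funext => z; rewrite indicE.
  have [h|h] := boolP (P z \in s).
    by rewrite mem_set.
  by rewrite memNset //; apply/negP.
apply: measurable_indic; apply: closed_measurable_open.
by apply: preimage_closed; [move=> z _; exact: cP|exact/closed_mem_seq/hausdorff_rV].
Qed.

Lemma measurable_fun_notin_seq (D : set B) (P : Omega -> 'rV[R]_n)
    (s : seq 'rV[R]_n) : continuous P ->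
  measurable_fun D (fun z : B => (P z \notin s)%:R : R).
Proof.
move=> cP; rewrite (_ : (fun z => _) = (fun z => 1 - (P z \in s)%:R)).
  by apply: measurable_funB => //; exact: measurable_fun_mem_seq.
by apply/funext => z; case: (_ \in _); rewrite ?subrr ?subr0.
Qed.

Lemma measurable_fun_eq1 (D : set B) (P : Omega -> 'rV[R]_n)
    (y0 : 'rV[R]_n) : continuous P ->
  measurable_fun D (fun z : B => (P z == y0)%:R : R).
Proof.
move=> cP; under eq_fun do rewrite -mem_seq1.
exact: measurable_fun_mem_seq.
Qed.

Lemma closed_simplex : closed (@simplex R n).
Proof.
have -> : @simplex R n = \bigcap_(k in [set: 'I_n]) [set p | 0 <= p ord0 k]
                         `&` [set p | \sum_(k < n) p ord0 k = 1].
  by apply/seteqP; split=> p /= [p0 p1]; split=> // k *; apply: p0.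
apply: closedI.
  apply: closed_bigI => k _.
  apply: (@closed_preimage _ _ (fun p : 'rV[R]_n => p ord0 k) [set x : R | 0 <= x]).
    exact: coord_continuous.
  exact: closed_ge.
apply: (@closed_preimage _ _ (fun p : 'rV[R]_n => \sum_(k < n) p ord0 k)
                          [set x : R | x = 1]); last exact: closed_eq.
by apply: continuous_big; [exact: add_continuous|move=> k _; exact: coord_continuous].
Qed.

Lemma continuous_l1norm : continuous (@l1norm R n).
Proof.
apply: continuous_big; first exact: add_continuous.
move=> k _ p; apply: continuous_comp; [exact: coord_continuous|exact: norm_continuous].
Qed.

Lemma closed_unit_interval : closed [set r : R | 0 <= r <= 1].
Proof.
rewrite (_ : [set r | _] = `[0, 1]%classic); first exact: interval_closed.
by apply/seteqP; split=> r; rewrite /= in_itv.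
Qed.

Lemma measurable_S3 : measurable (@S3 R n).
Proof.
apply: closed_measurable_open.
apply: closedI; [|apply: closedI; [|apply: closedI]].
- exact: (closed_preimage continuous_x closed_simplex).
- exact: (closed_preimage continuous_y closed_simplex).
- exact: (closed_preimage continuous_lambda closed_unit_interval).
- exact: (closed_preimage continuous_mu closed_unit_interval).
Qed.

End ambient_space.

Section integral_facts.
Context {d} {T : measurableType d} {R : realType}.
Variables (mu : {measure set T -> \bar R}) (D : set T).
Hypothesis mD : measurable D.

Lemma fineK_integral_le (f h : T -> R) :
  measurable_fun D f -> measurable_fun D h ->
  (forall z, D z -> 0 <= f z <= h z) ->
  (\int[mu]_(z in D) (h z)%:E)%E \is a fin_num ->
  ((fine (\int[mu]_(z in D) (f z)%:E))%:E = \int[mu]_(z in D) (f z)%:E)%E.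
Proof.
move=> mf mh fh hfin.
have f0 z : D z -> 0 <= f z by move=> Dz; case/andP: (fh z Dz).
rewrite fineK // ge0_fin_numE; last by apply: integral_ge0 => z Dz; rewrite lee_fin f0.
have /fin_numPlt/andP[_ hlt] := hfin; apply: le_lt_trans hlt.
apply: ge0_le_integral => //; try exact/measurable_EFinP.
by move=> z Dz; rewrite lee_fin; case/andP: (fh z Dz).
Qed.

Lemma ge0_integral_min_le (f h : T -> R) :
  measurable_fun D f -> measurable_fun D h ->
  (forall z, D z -> 0 <= f z) -> (forall z, D z -> 0 <= h z) ->
  (\int[mu]_(z in D) (Num.min (f z) (h z))%:E <=
   Order.min (\int[mu]_(z in D) (f z)%:E) (\int[mu]_(z in D) (h z)%:E))%E.
Proof.
move=> mf mh f0 h0; have mfh := measurable_minr mf mh.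
rewrite le_min; apply/andP; split; apply: ge0_le_integral => //;
  try exact/measurable_EFinP.
- by move=> z Dz; rewrite lee_fin le_min f0 ?h0.
- by move=> z Dz; rewrite lee_fin ge_min lexx.
- by move=> z Dz; rewrite lee_fin le_min f0 ?h0.
- by move=> z Dz; rewrite lee_fin ge_min lexx orbT.
Qed.

End integral_facts.

Section marginal.
Context {R : realType} {n : nat}.
Local Notation Omega := (('rV[R]_n * 'rV[R]_n) * (R * R))%type.
Local Notation B := (BAmb R n).
Variables (g : {measure set B -> \bar R}) (D : set B).
Variables (P : Omega -> 'rV[R]_n) (L : Omega -> R).
Variables (W : seq 'rV[R]_n) (w : 'rV[R]_n -> R).
Hypotheses (mD : measurable D) (cP : continuous P) (cL : continuous L).
Hypotheses (L0 : forall z, D z -> 0 <= L z) (uW : uniq W).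
Hypothesis marginalE : forall f : 'rV[R]_n -> R, continuous f ->
  (\int[g]_(z in D) (L z * f (P z))%:E = (\sum_(x <- W) w x * f x)%:E)%E.

Let continuous_weighted (f : 'rV[R]_n -> R) : continuous f ->
  continuous (fun z => L z * f (P z)).
Proof.
move=> cf z; apply: continuousM; first exact: cL.
by apply: continuous_comp; [exact: cP|exact: cf].
Qed.

Lemma integral_density : (\int[g]_(z in D) (L z)%:E = (\sum_(x <- W) w x)%:E)%E.
Proof.
have := @marginalE (fun=> 1) (@cst_continuous _ _ (1 : R)).
by under eq_integral do rewrite mulr1; under eq_bigr do rewrite mulr1.
Qed.

(* Continuous, with values in [0, 1], equal to 1 at [x0] and to 0 on the rest
   of [W]. *)
Let bump (x0 x : 'rV[R]_n) : R :=
  \prod_(x1 <- W | x1 != x0) Num.min 1 (`|x - x1| / `|x0 - x1|).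

Let continuous_bump x0 : continuous (bump x0).
Proof.
apply: continuous_big; first exact: mul_continuous.
move=> x1 _ x.
have cd : {for x, continuous (fun y : 'rV[R]_n => `|y - x1| / `|x0 - x1|)}.
  apply: continuousM; last exact: cst_continuous.
  apply: continuous_comp; last exact: norm_continuous.
  by apply: continuousB; [exact: cvg_id|exact: cst_continuous].
exact: (continuous_min (@cst_continuous _ _ (1 : R) x) cd).
Qed.

Let bump_ge0 x0 x : 0 <= bump x0 x.
Proof. by apply: prodr_ge0 => x1 _; rewrite le_min ler01 divr_ge0. Qed.

Let bump_id x0 : bump x0 x0 = 1.
Proof.
apply: big1 => x1 x10; rewrite divff ?minxx //.
by rewrite normr_eq0 subr_eq0 eq_sym.
Qed.

Let integral_bump x0 : x0 \in W -> (\sum_(x <- W) w x * bump x0 x) = w x0.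
Proof.
move=> x0W; rewrite (bigD1_seq x0) //= bump_id mulr1 big1_seq ?addr0 //.
move=> x /andP[xx0 xW]; apply/eqP; rewrite mulf_eq0 prodf_seq_eq0; apply/orP; right.
apply/hasP; exists x => //.
by rewrite xx0 subrr normr0 mul0r /=; apply/eqP/min_idPr/ler01.
Qed.

Lemma sum_integral_cell_le (Q : Omega -> 'rV[R]_n) (s : seq 'rV[R]_n) x0 :
  continuous Q -> uniq s -> x0 \in W ->
  (\sum_(y <- s) \int[g]_(z in D) (L z * ((P z == x0)%:R * (Q z == y)%:R))%:E
     <= (w x0)%:E)%E.
Proof.
move=> cQ us x0W.
have mcell y : measurable_fun D (fun z : B => L z * ((P z == x0)%:R * (Q z == y)%:R)).
  apply: measurable_funM; first exact: continuous_measurable_open.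
  by apply: measurable_funM; apply: measurable_fun_eq1.
have cell0 y z : D z -> (0 <= (L z * ((P z == x0)%:R * (Q z == y)%:R))%:E)%E.
  by move=> Dz; rewrite lee_fin mulr_ge0 ?L0 // mulr_ge0.
rewrite -ge0_integral_sum //; last by move=> y; exact/measurable_EFinP.
rewrite -integral_bump // -marginalE //.
apply: ge0_le_integral => //.
- by move=> z Dz; apply: sume_ge0 => y _; exact: cell0.
- by apply: emeasurable_sum => y; exact/measurable_EFinP.
- apply/measurable_EFinP; apply: continuous_measurable_open => //.
  exact: continuous_weighted.
move=> z Dz; rewrite sumEFin lee_fin -mulr_sumr ler_wpM2l ?L0 // -mulr_sumr.
rewrite sum_eq_mem //; have [->|_] := eqVneq (P z) x0; last by rewrite mul0r.
by rewrite bump_id mul1r; case: (Q z \in s).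
Qed.

Let dist_support (x : 'rV[R]_n) : R := \prod_(x1 <- W) `|x - x1|.

Lemma integral_outside_support :
  (\int[g]_(z in D) (L z * (P z \notin W)%:R)%:E = 0)%E.
Proof.
have cdist : continuous dist_support.
  apply: continuous_big; first exact: mul_continuous.
  move=> x1 _ x; apply: continuous_comp; last exact: norm_continuous.
  by apply: continuousB; [exact: cvg_id|exact: cst_continuous].
have mdist : measurable_fun D (fun z : B => (L z * dist_support (P z))%:E).
  apply/measurable_EFinP; apply: continuous_measurable_open => //.
  exact: continuous_weighted.
have int0 : (\int[g]_(z in D) (L z * dist_support (P z))%:E = 0)%E.
  rewrite marginalE // big1_seq // => x /andP[_ xW].
  apply/eqP; rewrite mulf_eq0 prodf_seq_eq0; apply/orP; right.
  apply/hasP; exists x => //.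
  by rewrite subrr normr0 eqxx.
have : (\int[g]_(z in D) `|(L z * dist_support (P z))%:E| = 0)%E.
  rewrite -int0; apply: eq_integral => z; rewrite inE => Dz.
  by rewrite gee0_abs // lee_fin mulr_ge0 ?L0 //; apply: prodr_ge0.
move=> /(ae_eq_integral_abs g mD mdist) ae0.
rewrite (ae_eq_integral (cst 0%E)) ?integral0 //.
- apply/measurable_EFinP/measurable_funM.
    exact: continuous_measurable_open.
  exact: measurable_fun_notin_seq.
- apply: filterS ae0 => z /= h Dz; have /eqP := h Dz; rewrite eqe mulf_eq0.
  have [PzW|PzW] := boolP (P z \in W); first by rewrite mulr0.
  rewrite prodf_seq_eq0 => /orP[/eqP ->|/hasP[x1 x1W /=]]; first by rewrite mul0r.
  by rewrite normr_eq0 subr_eq0 => /eqP PzE; rewrite PzE x1W in PzW.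
Qed.

End marginal.

Lemma d5_le_overlap {R : realType} {n : nat} {U V : seq 'rV[R]_n}
    {wu wv : 'rV[R]_n -> R} {ab} :
  {in U, forall x, @simplex R n x} -> {in V, forall y, @simplex R n y} ->
  M5 U V wu wv ab ->
  (d5 U V wu wv <= (2 - 2 * \sum_(x <- U) \sum_(y <- V)
                        overlap (ab.1 x y) x (ab.2 x y) y)%:E)%E.
Proof.
move=> sU sV abM5; apply: ereal_inf_lbound; exists ab => //; congr _%:E.
rewrite -mulNr mulr_sumr; congr (_ + _); apply: eq_big_seq => x xU.
rewrite mulr_sumr; apply: eq_big_seq => y yV.
have := l1normB_add_overlap (ab.1 x y) x (ab.2 x y) y (sU x xU).2 (sV y yV).2.
lra.
Qed.

Section transport_plan.
Variables (R : realType) (n : nat) (U V : seq 'rV[R]_n) (wu wv : 'rV[R]_n -> R).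
Hypotheses (hu : fin_prob U wu) (hv : fin_prob V wv).
Local Notation Omega := (('rV[R]_n * 'rV[R]_n) * (R * R))%type.
Local Notation B := (BAmb R n).
Local Notation D := (@S3 R n).
Variable g : {measure set B -> \bar R}.
Hypothesis gM3 : M3 U V wu wv g.

Let marginal_x (f : 'rV[R]_n -> R) : continuous f ->
  (\int[g]_(z in D) (z.2.1 * f z.1.1)%:E = (\sum_(x <- U) wu x * f x)%:E)%E.
Proof. by move=> cf; case: gM3 => _ [_ /(_ f (continuous_subspaceT cf))[]]. Qed.

Let marginal_y (f : 'rV[R]_n -> R) : continuous f ->
  (\int[g]_(z in D) (z.2.2 * f z.1.2)%:E = (\sum_(y <- V) wv y * f y)%:E)%E.
Proof. by move=> cf; case: gM3 => _ [_ /(_ f (continuous_subspaceT cf))[]]. Qed.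

Let lambda_ge0 (z : B) : D z -> 0 <= z.2.1.
Proof. by case=> _ [_ [/andP[]]]. Qed.

Let mu_ge0 (z : B) : D z -> 0 <= z.2.2.
Proof. by case=> _ [_ [_ /andP[]]]. Qed.

Let integral_lambda : (\int[g]_(z in D) (z.2.1)%:E = 1)%E.
Proof.
case: hu => uU _ _ wu1; rewrite -wu1.
exact: (@integral_density _ _ g D (fun z => z.1.1) (fun z => z.2.1) U wu marginal_x).
Qed.

Let integral_mu : (\int[g]_(z in D) (z.2.2)%:E = 1)%E.
Proof.
case: hv => uV _ _ wv1; rewrite -wv1.
exact: (@integral_density _ _ g D (fun z => z.1.2) (fun z => z.2.2) V wv marginal_y).
Qed.

Let mD : measurable D := measurable_S3.

Let measurable_D {f : Omega -> R} : continuous f -> measurable_fun D (f : B -> R).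
Proof. exact: continuous_measurable_open mD. Qed.

Let cell (x0 y0 : 'rV[R]_n) (z : Omega) : R := (z.1.1 == x0)%:R * (z.1.2 == y0)%:R.

Let cell01 x0 y0 z : 0 <= cell x0 y0 z <= 1.
Proof.
by rewrite /cell; case: (_ == _); case: (_ == _);
  rewrite /= ?mulr1n ?mul0r ?mulr0 ?mulr1 ?lexx ?ler01.
Qed.

Let measurable_cell x0 y0 : measurable_fun D (cell x0 y0 : B -> R).
Proof.
by apply: measurable_funM; apply: measurable_fun_eq1;
  [exact: continuous_x|exact: continuous_y].
Qed.

Let lambda_cell_ge0 x0 y0 z : D z -> 0 <= z.2.1 * cell x0 y0 z <= z.2.1.
Proof.
move=> Dz; have [c0 c1] := andP (cell01 x0 y0 z).
by rewrite mulr_ge0 ?lambda_ge0 // ler_piMr ?lambda_ge0.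
Qed.

Let mu_cell_ge0 x0 y0 z : D z -> 0 <= z.2.2 * cell x0 y0 z <= z.2.2.
Proof.
move=> Dz; have [c0 c1] := andP (cell01 x0 y0 z).
by rewrite mulr_ge0 ?mu_ge0 // ler_piMr ?mu_ge0.
Qed.

Let measurable_lambda_cell x0 y0 :
  measurable_fun D (fun z : B => z.2.1 * cell x0 y0 z).
Proof.
by apply: measurable_funM; [exact: measurable_D continuous_lambda|exact: measurable_cell].
Qed.

Let measurable_mu_cell x0 y0 : measurable_fun D (fun z : B => z.2.2 * cell x0 y0 z).
Proof.
by apply: measurable_funM; [exact: measurable_D continuous_mu|exact: measurable_cell].
Qed.

(* The transport plan read off [g]: the [lambda]- and [mu]-masses of the cells. *)
Let plan_x x0 y0 : R := fine (\int[g]_(z in D) (z.2.1 * cell x0 y0 z)%:E).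
Let plan_y x0 y0 : R := fine (\int[g]_(z in D) (z.2.2 * cell x0 y0 z)%:E).

Let plan_xE x0 y0 :
  ((plan_x x0 y0)%:E = \int[g]_(z in D) (z.2.1 * cell x0 y0 z)%:E)%E.
Proof.
apply: (fineK_integral_le g D mD _ _ (measurable_lambda_cell x0 y0)
          (measurable_D continuous_lambda) (lambda_cell_ge0 x0 y0)).
by rewrite integral_lambda.
Qed.

Let plan_yE x0 y0 :
  ((plan_y x0 y0)%:E = \int[g]_(z in D) (z.2.2 * cell x0 y0 z)%:E)%E.
Proof.
apply: (fineK_integral_le g D mD _ _ (measurable_mu_cell x0 y0)
          (measurable_D continuous_mu) (mu_cell_ge0 x0 y0)).
by rewrite integral_mu.
Qed.

Lemma transport_plan_M5 : M5 U V wu wv (plan_x, plan_y).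
Proof.
case: hu => uU _ _ _; case: hv => uV _ _ _.
split; [|split].
- move=> x y _ _; split; apply: fine_ge0; apply: integral_ge0 => z Dz; rewrite lee_fin.
    by case/andP: (lambda_cell_ge0 x y z Dz).
  by case/andP: (mu_cell_ge0 x y z Dz).
- move=> x0 x0U /=; rewrite -lee_fin -sumEFin; under eq_bigr do rewrite plan_xE.
  exact: (@sum_integral_cell_le _ _ g D _ _ U wu mD continuous_x
    continuous_lambda lambda_ge0 uU marginal_x _ V x0 continuous_y uV x0U).
- move=> y0 y0V /=; rewrite -lee_fin -sumEFin; under eq_bigr do rewrite plan_yE.
  have cellC x z : cell x y0 z = (z.1.2 == y0)%:R * (z.1.1 == x)%:R by rewrite mulrC.
  under eq_bigr do under eq_integral do rewrite cellC.
  exact: (@sum_integral_cell_le _ _ g D _ _ V wv mD continuous_y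
    continuous_mu mu_ge0 uV marginal_y _ U y0 continuous_x uU y0V).
Qed.

Let overlap_at (z : Omega) : R := overlap z.2.1 z.1.1 z.2.2 z.1.2.

Let continuous_overlap_at : continuous overlap_at.
Proof.
apply: continuous_big; first exact: add_continuous.
move=> k _ z.
have cx : {for z, continuous (fun z : Omega => z.2.1 * z.1.1 ord0 k)}.
  apply: continuousM; first exact: continuous_lambda.
  exact: (continuous_coord k continuous_x).
have cy : {for z, continuous (fun z : Omega => z.2.2 * z.1.2 ord0 k)}.
  apply: continuousM; first exact: continuous_mu.
  exact: (continuous_coord k continuous_y).
exact: (continuous_min cx cy).
Qed.

Let overlap_at_ge0 z : D z -> 0 <= overlap_at z.
Proof.
by move=> Dz; have [[x0 _] [[y0 _] _]] := Dz;
  apply: overlap_ge0; [exact: lambda_ge0|exact: mu_ge0|exact: x0|exact: y0].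
Qed.

Let overlap_at_le z : D z -> overlap_at z <= z.2.1 /\ overlap_at z <= z.2.2.
Proof.
by case=> [[_ x1] [[_ y1] _]]; split; [exact: overlap_le_l|exact: overlap_le_r].
Qed.

Let measurable_overlap_at : measurable_fun D (fun z : B => (overlap_at z)%:E).
Proof. by apply/measurable_EFinP; exact: measurable_D continuous_overlap_at. Qed.

(* On the cell [z.1.1 = x0] and [z.1.2 = y0]; off it both sides vanish. *)
Let cell_overlap_atE x0 y0 z : cell x0 y0 z * overlap_at z = \sum_(k < n)
  Num.min (x0 ord0 k * (z.2.1 * cell x0 y0 z)) (y0 ord0 k * (z.2.2 * cell x0 y0 z)).
Proof.
rewrite /overlap_at /overlap mulr_sumr; apply: eq_bigr => k _; rewrite /cell.
have [->|_] := eqVneq z.1.1 x0; have [->|_] := eqVneq z.1.2 y0 => /=;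
  rewrite ?(mulr1n, mulr0n, mul0r, mulr0, mul1r, mulr1, minxx) //.
by rewrite [x0 _ _ * _]mulrC [y0 _ _ * _]mulrC.
Qed.

Lemma integral_cell_overlap_le x0 y0 : x0 \in U -> y0 \in V ->
  (\int[g]_(z in D) (cell x0 y0 z * overlap_at z)%:E <=
   (overlap (plan_x x0 y0) x0 (plan_y x0 y0) y0)%:E)%E.
Proof.
case: hu => _ sU _ _; case: hv => _ sV _ _ /sU[x00 _] /sV[y00 _].
have lc0 z : D z -> 0 <= z.2.1 * cell x0 y0 z.
  by move=> Dz; case/andP: (lambda_cell_ge0 x0 y0 z Dz).
have mc0 z : D z -> 0 <= z.2.2 * cell x0 y0 z.
  by move=> Dz; case/andP: (mu_cell_ge0 x0 y0 z Dz).
have mx k : measurable_fun D (fun z : B => x0 ord0 k * (z.2.1 * cell x0 y0 z)).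
  exact: measurable_funM.
have my k : measurable_fun D (fun z : B => y0 ord0 k * (z.2.2 * cell x0 y0 z)).
  exact: measurable_funM.
have nx k z : D z -> 0 <= x0 ord0 k * (z.2.1 * cell x0 y0 z).
  by move=> Dz; rewrite mulr_ge0 ?lc0.
have ny k z : D z -> 0 <= y0 ord0 k * (z.2.2 * cell x0 y0 z).
  by move=> Dz; rewrite mulr_ge0 ?mc0.
have nmin k z : D z -> (0 <= (Num.min (x0 ord0 k * (z.2.1 * cell x0 y0 z))
                                       (y0 ord0 k * (z.2.2 * cell x0 y0 z)))%:E)%E.
  by move=> Dz; rewrite lee_fin le_min nx ?ny.
have mmin k : measurable_fun D (fun z : B => (Num.min (x0 ord0 k * (z.2.1 * cell x0 y0 z))
                                       (y0 ord0 k * (z.2.2 * cell x0 y0 z)))%:E).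
  exact/measurable_EFinP/measurable_minr.
under eq_integral do rewrite cell_overlap_atE -sumEFin.
rewrite ge0_integral_sum // -sumEFin; apply: lee_sum => k _.
apply: le_trans (ge0_integral_min_le g D mD _ _ (mx k) (my k) (nx k) (ny k)) _.
have lcE z : D z -> (0 <= (z.2.1 * cell x0 y0 z)%:E)%E by move/lc0; rewrite lee_fin.
have mcE z : D z -> (0 <= (z.2.2 * cell x0 y0 z)%:E)%E by move/mc0; rewrite lee_fin.
have mlcE : measurable_fun D (fun z : B => (z.2.1 * cell x0 y0 z)%:E).
  by apply/measurable_EFinP; exact: measurable_lambda_cell.
have mmcE : measurable_fun D (fun z : B => (z.2.2 * cell x0 y0 z)%:E).
  by apply/measurable_EFinP; exact: measurable_mu_cell.
under eq_integral do rewrite EFinM.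
rewrite (ge0_integralZl_EFin g mD lcE mlcE (x00 k)).
under [X in (mine _ X <= _)%E]eq_integral do rewrite EFinM.
rewrite (ge0_integralZl_EFin g mD mcE mmcE (y00 k)).
by rewrite -plan_xE -plan_yE -!EFinM EFin_min [x0 _ _ * _]mulrC [y0 _ _ * _]mulrC.
Qed.

Let integral_overlap_atE :
  ((fine (\int[g]_(z in D) (overlap_at z)%:E))%:E =
   \int[g]_(z in D) (overlap_at z)%:E)%E.
Proof.
apply: (fineK_integral_le g D mD _ _
          (measurable_D continuous_overlap_at) (measurable_D continuous_lambda)).
- by move=> z Dz; rewrite overlap_at_ge0 //= (overlap_at_le z Dz).1.
- by rewrite integral_lambda.
Qed.

Let outside (z : Omega) : R :=
  z.2.1 * (z.1.1 \notin U)%:R + z.2.2 * (z.1.2 \notin V)%:R.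

Let outside_ge0 z : D z -> (0 <= (outside z)%:E)%E.
Proof. by move=> Dz; rewrite lee_fin addr_ge0 ?mulr_ge0 ?lambda_ge0 ?mu_ge0. Qed.

Let measurable_outside : measurable_fun D (fun z : B => (outside z)%:E).
Proof.
apply/measurable_EFinP/measurable_funD; apply: measurable_funM.
- exact: measurable_D continuous_lambda.
- exact: measurable_fun_notin_seq continuous_x.
- exact: measurable_D continuous_mu.
- exact: measurable_fun_notin_seq continuous_y.
Qed.

Let integral_outside : (\int[g]_(z in D) (outside z)%:E = 0)%E.
Proof.
have ml : measurable_fun D (fun z : B => (z.2.1 * (z.1.1 \notin U)%:R)%:E).
  apply/measurable_EFinP/measurable_funM; first exact: measurable_D continuous_lambda.
  exact: measurable_fun_notin_seq continuous_x.
have mm : measurable_fun D (fun z : B => (z.2.2 * (z.1.2 \notin V)%:R)%:E).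
  apply/measurable_EFinP/measurable_funM; first exact: measurable_D continuous_mu.
  exact: measurable_fun_notin_seq continuous_y.
have l0 z : D z -> (0 <= (z.2.1 * (z.1.1 \notin U)%:R)%:E)%E.
  by move=> Dz; rewrite lee_fin mulr_ge0 ?lambda_ge0.
have m0 z : D z -> (0 <= (z.2.2 * (z.1.2 \notin V)%:R)%:E)%E.
  by move=> Dz; rewrite lee_fin mulr_ge0 ?mu_ge0.
under eq_integral do rewrite EFinD.
rewrite ge0_integralD //.
rewrite (integral_outside_support g D _ _ U wu mD continuous_x continuous_lambda
           lambda_ge0 marginal_x).
by rewrite (integral_outside_support g D _ _ V wv mD continuous_y continuous_mu
              mu_ge0 marginal_y) adde0.
Qed.

(* The marginals are carried by [U] and [V], so up to [outside] (which is
   [g]-negligible) the cells over [U * V] cover everything. *)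
Let overlap_at_le_cells z : D z ->
  overlap_at z <= \sum_(x <- U) \sum_(y <- V) cell x y z * overlap_at z + outside z.
Proof.
case: hu => uU _ _ _; case: hv => uV _ _ _ Dz.
have [le1 le2] := overlap_at_le z Dz.
have -> : \sum_(x <- U) \sum_(y <- V) cell x y z * overlap_at z =
          (z.1.1 \in U)%:R * (z.1.2 \in V)%:R * overlap_at z.
  rewrite -(sum_eq_mem z.1.1 uU) -(sum_eq_mem z.1.2 uV) !mulr_suml.
  apply: eq_bigr => x _; rewrite [_ * \sum_(a <- V) _]mulr_sumr mulr_suml.
  by apply: eq_bigr => y _.
have := overlap_at_ge0 z Dz; have := lambda_ge0 z Dz; have := mu_ge0 z Dz.
by rewrite /outside; case: (_ \in U); case: (_ \in V); rewrite /= ?mulr1n ?mulr0n; lra.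
Qed.

Lemma integral_overlap_at_le :
  (\int[g]_(z in D) (overlap_at z)%:E <=
   (\sum_(x <- U) \sum_(y <- V) overlap (plan_x x y) x (plan_y x y) y)%:E)%E.
Proof.
have cm0 x y z : D z -> (0 <= (cell x y z * overlap_at z)%:E)%E.
  by move=> Dz; rewrite lee_fin mulr_ge0 ?overlap_at_ge0 //; case/andP: (cell01 x y z).
have mcm x y : measurable_fun D (fun z : B => (cell x y z * overlap_at z)%:E).
  apply/measurable_EFinP/measurable_funM; first exact: measurable_cell.
  exact: measurable_D continuous_overlap_at.
have mrow x : measurable_fun D (fun z => \sum_(y <- V) (cell x y z * overlap_at z)%:E).
  exact: emeasurable_sum.
have row0 x z : D z -> (0 <= \sum_(y <- V) (cell x y z * overlap_at z)%:E)%E.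
  by move=> Dz; apply: sume_ge0 => y _; exact: cm0.
have mcells : measurable_fun D (fun z : B =>
    \sum_(x <- U) \sum_(y <- V) (cell x y z * overlap_at z)%:E).
  exact: emeasurable_sum.
have cells0 z : D z ->
    (0 <= \sum_(x <- U) \sum_(y <- V) (cell x y z * overlap_at z)%:E)%E.
  by move=> Dz; apply: sume_ge0 => x _; exact: row0.
apply: (@le_trans _ _ (\int[g]_(z in D)
    (\sum_(x <- U) \sum_(y <- V) (cell x y z * overlap_at z)%:E + (outside z)%:E))%E).
  apply: ge0_le_integral => //; first exact: emeasurable_funD.
  move=> z Dz; under eq_bigr do rewrite sumEFin.
  by rewrite sumEFin -EFinD lee_fin overlap_at_le_cells.
rewrite ge0_integralD // integral_outside adde0 ge0_integral_sum //.
rewrite -sumEFin big_seq [leRHS]big_seq; apply: lee_sum => x xU.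
rewrite ge0_integral_sum //; last by move=> y; exact: cm0.
rewrite -sumEFin big_seq [leRHS]big_seq; apply: lee_sum => y yV.
exact: integral_cell_overlap_le.
Qed.

Lemma integral_l1norm_overlap_at :
  (\int[g]_(z in D) (l1norm (z.2.1 *: z.1.1 - z.2.2 *: z.1.2))%:E =
   (2 - 2 * fine (\int[g]_(z in D) (overlap_at z)%:E))%:E)%E.
Proof.
set N := fun z : Omega => l1norm (z.2.1 *: z.1.1 - z.2.2 *: z.1.2).
set r := fine _.
have cN : continuous N.
  move=> z; apply: continuous_comp; last exact: continuous_l1norm.
  by apply: continuousB; apply: continuousZ; [exact: continuous_lambda|
    exact: continuous_x|exact: continuous_mu|exact: continuous_y].
have N0 z : D z -> (0 <= (N z)%:E)%E by move=> _; rewrite lee_fin; apply: sumr_ge0.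
have m0 z : D z -> (0 <= (overlap_at z)%:E)%E.
  by move=> Dz; rewrite lee_fin overlap_at_ge0.
have mN : measurable_fun D (fun z : B => (N z)%:E).
  by apply/measurable_EFinP; exact: measurable_D cN.
have : (\int[g]_(z in D) ((N z)%:E + ((overlap_at z)%:E + (overlap_at z)%:E)) =
        \int[g]_(z in D) ((z.2.1)%:E + (z.2.2)%:E))%E.
  apply: eq_integral => z; rewrite inE => -[[_ x1] [[_ y1] _]].
  have := l1normB_add_overlap z.2.1 z.1.1 z.2.2 z.1.2 x1 y1.
  by rewrite -!EFinD => <-; congr _%:E; rewrite /N /overlap_at; lra.
have mm2 : measurable_fun D (fun z : B => ((overlap_at z)%:E + (overlap_at z)%:E)%E).
  exact: emeasurable_funD.
have m20 z : D z -> (0 <= (overlap_at z)%:E + (overlap_at z)%:E)%E.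
  by move=> Dz; rewrite adde_ge0 ?m0.
have l0 z : D z -> (0 <= (z.2.1)%:E)%E by move=> Dz; rewrite lee_fin lambda_ge0.
have u0 z : D z -> (0 <= (z.2.2)%:E)%E by move=> Dz; rewrite lee_fin mu_ge0.
have ml : measurable_fun D (fun z : B => (z.2.1)%:E).
  by apply/measurable_EFinP; exact: measurable_D continuous_lambda.
have mu : measurable_fun D (fun z : B => (z.2.2)%:E).
  by apply/measurable_EFinP; exact: measurable_D continuous_mu.
rewrite !ge0_integralD //.
rewrite integral_lambda integral_mu -integral_overlap_atE -/r.
by case: (\int[g]_(z in D) (N z)%:E)%E => //= s; rewrite -!EFinD => -[h]; congr _%:E; lra.
Qed.

Lemma d5_le_integral_l1norm :
  (d5 U V wu wv <= \int[g]_(z in D) (l1norm (z.2.1 *: z.1.1 - z.2.2 *: z.1.2))%:E)%E.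
Proof.
case: hu => _ sU _ _; case: hv => _ sV _ _.
rewrite integral_l1norm_overlap_at.
apply: le_trans (d5_le_overlap sU sV transport_plan_M5) _.
have := integral_overlap_at_le; rewrite -integral_overlap_atE !lee_fin; lra.
Qed.

End transport_plan.

Theorem lemma5 (R : realType) (n : nat) (U V : seq 'rV[R]_n)
  (wu wv : 'rV[R]_n -> R) :
  (0 < n)%N -> fin_prob U wu -> fin_prob V wv ->
  (d5 U V wu wv <= d3 U V wu wv)%E.
Proof.
move=> _ hu hv; apply: le_ereal_inf_tmp => _ [g gM3 <-].
exact: d5_le_integral_l1norm.
Qed.
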